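(* Let $t\in\mathbb{R}$, $\mu>0$, $\sigma>0$, $\lambda>0$ with $\lambda\ge(\mu-t)_-$. Let $\mathcal{L}^+_{\lambda}(\mu,\sigma)$ be the set of probability distributions $F$ on $\mathbb{R}$ such that, for $X\sim F$, $\mathbb{E}^F[X]=\mu$, $\mathbb{E}^F[X^2]=\mu^2+\sigma^2$, $F(0-)=0$, and $\mathbb{E}^F[(X-t)_-]\le\lambda$. Then $\mathcal{L}^+_{\lambda}(\mu,\sigma)$ is non-empty if and only if either $\lambda>(\mu-t)_-$, or $\lambda=(\mu-t)_-$ and $\sigma^2\le\mu(t-\mu)$.
   Context: For $x\in\mathbb{R}$, $(x)_-=\max\{-x,0\}$. $F(0-)=\mathbb{P}(X<0)$ under $F$. *)

From HB Require Import structures.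
From mathcomp Require Import all_boot all_order all_algebra.
From mathcomp Require Import all_classical all_reals all_analysis.
Set Implicit Arguments. Unset Strict Implicit. Unset Printing Implicit Defensive.
Import Order.TTheory GRing.Theory Num.Theory.
Local Open Scope classical_set_scope.
Local Open Scope ring_scope.

Definition negpart (R : realType) (x : R) : R := Num.max (- x) 0.

Definition Lplus (R : realType) (t mu sigma lam : R) : set (probability R R) :=
  [set P | [/\ P.-integrable [set: R] (fun x => x%:E),
              (\int[P]_x (x%:E) = mu%:E)%E,
              (\int[P]_x ((x ^+ 2)%:E) = (mu ^+ 2 + sigma ^+ 2)%:E)%E,
              P [set x | x < 0] = 0%E &
              (\int[P]_x ((negpart (x - t))%:E) <= lam%:E)%E]].

From HB Require Import structures.
From mathcomp Require Import all_boot all_order all_algebra.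
From mathcomp Require Import all_classical all_reals all_analysis.
From mathcomp Require Import measurable_realfun ring lra.
Import Order.TTheory GRing.Theory Num.Theory.
Local Open Scope classical_set_scope.
Local Open Scope ring_scope.
Set Implicit Arguments. Unset Strict Implicit. Unset Printing Implicit Defensive.

(* Sufficiency: the two-point law on {mu - a, mu + b} with weights b/(a+b) and
   a/(a+b) has mean mu and variance a b.  With a b = sigma^2 and a small, the upper
   point lies above t, so E[(X - t)_-] <= (mu - t)_- + a, which fits under any
   lam > (mu - t)_-.  In the tight case a = mu puts the lower point at 0 and, when
   sigma^2 <= mu (t - mu), both points at or below t, so E[(X - t)_-] = t - mu.
   Necessity in the tight case lam = t - mu > 0: since (x - t)_- + (x - t) = (x - t)_+,
   E[(X - t)_+] <= 0, i.e. X <= t almost surely; with X >= 0 this gives X^2 <= t X,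
   hence mu^2 + sigma^2 <= t mu. *)

Section negpart.
Variable R : realType.
Implicit Types y a : R.

Lemma negpart_ge0 y : 0 <= negpart y.
Proof. by rewrite /negpart le_max lexx orbT. Qed.

Lemma ger0_negpart y : 0 <= y -> negpart y = 0.
Proof. by move=> y0; rewrite /negpart max_r // oppr_le0. Qed.

Lemma ler0_negpart y : y <= 0 -> negpart y = - y.
Proof. by move=> y0; rewrite /negpart max_l // oppr_ge0. Qed.

Lemma negpart_gt0 y : (0 < negpart y) = (y < 0).
Proof.
have [y0|y0] := leP 0 y; first by rewrite ger0_negpart // ltxx.
by rewrite ler0_negpart ?oppr_gt0 // ltW.
Qed.

Lemma negpart_addr y : negpart y + y = Num.max y 0.
Proof.
have [y0|y0] := leP 0 y; first by rewrite ger0_negpart // add0r.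
by rewrite ler0_negpart ?ltW // addNr.
Qed.

Lemma negpart_subr_le y a : 0 <= a -> negpart (y - a) <= negpart y + a.
Proof.
move=> a0; rewrite {1}/negpart ge_max addr_ge0 ?negpart_ge0 // andbT.
have : - y <= negpart y by rewrite /negpart le_max lexx.
lra.
Qed.

Lemma measurable_negpart : measurable_fun [set: R] (@negpart R).
Proof.
have -> : @negpart R = -%R \max cst 0 by [].
exact: measurable_maxr.
Qed.

Lemma measurable_negpart_subr t : measurable_fun [set: R] (fun x => negpart (x - t)).
Proof. by apply: measurableT_comp; [exact: measurable_negpart | exact: measurable_funB]. Qed.

End negpart.

Definition two_point_rv (R : realType) (x1 x2 : R) (b : bool) : R := if b then x2 else x1.

Lemma measurable_two_point_rv (R : realType) (x1 x2 : R) :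
  measurable_fun [set: bool] (two_point_rv x1 x2).
Proof. by move=> _ Y _; rewrite setTI. Qed.

HB.instance Definition _ (R : realType) (x1 x2 : R) :=
  isMeasurableFun.Build _ _ bool R (two_point_rv x1 x2) (measurable_two_point_rv x1 x2).

Definition two_point_law (R : realType) (x1 x2 p : R) : probability R R :=
  distribution (bernoulli_prob p) (two_point_rv x1 x2).

Section two_point_law.
Variables (R : realType) (x1 x2 p : R).
Hypothesis p01 : 0 <= p <= 1.
Local Notation P := (two_point_law x1 x2 p).

Lemma integrable_two_point_rv (h : R -> R) :
  (bernoulli_prob p).-integrable [set: bool] (fun b => (h (two_point_rv x1 x2 b))%:E).
Proof.
apply/integrableP; split; first by move=> _ Y _; rewrite setTI.
by rewrite integral_bernoulli_prob // !abse_EFin -!EFinM -EFinD ltry.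
Qed.

Lemma integrable_two_point_law : P.-integrable [set: R] EFin.
Proof.
apply: integrable_pushforward => //.
rewrite preimage_setT; exact: (integrable_two_point_rv id).
Qed.

Lemma integral_two_point_law (h : R -> R) : measurable_fun [set: R] h ->
  0 <= h x1 -> 0 <= h x2 ->
  (\int[P]_x (h x)%:E = (p * h x2 + (1 - p) * h x1)%:E)%E.
Proof.
move=> mh h1 h2; rewrite integral_distribution //; last first.
- exact: integrable_two_point_rv.
- exact/measurable_EFinP.
by rewrite integral_bernoulli_prob // => -[].
Qed.

Lemma two_point_law_lt0 : 0 <= x1 -> 0 <= x2 -> P [set x | x < 0] = 0%E.
Proof.
move=> x10 x20; rewrite /= /pushforward.
suff -> : two_point_rv x1 x2 @^-1` [set x | x < 0] = set0 by exact: measure0.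
by apply/seteqP; split => // -[] /=; rewrite ltNge ?x10 ?x20.
Qed.

End two_point_law.

Section two_point_Lplus.
Variable R : realType.

Lemma mean_two_point (mu a b : R) : a + b != 0 ->
  a / (a + b) * (mu + b) + (1 - a / (a + b)) * (mu - a) = mu.
Proof. by move=> ab0; field. Qed.

Lemma second_moment_two_point (mu a b : R) : a + b != 0 ->
  a / (a + b) * (mu + b) ^+ 2 + (1 - a / (a + b)) * (mu - a) ^+ 2 = mu ^+ 2 + a * b.
Proof. by move=> ab0; field. Qed.

Lemma Lplus_two_point (t mu sigma lam a b : R) :
  0 < a <= mu -> 0 < b -> a * b = sigma ^+ 2 ->
  a / (a + b) * negpart (mu + b - t) + (1 - a / (a + b)) * negpart (mu - a - t) <= lam ->
  Lplus t mu sigma lam (two_point_law (mu - a) (mu + b) (a / (a + b))).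
Proof.
case/andP=> a0 amu b0 abE hneg.
have ab_gt0 : 0 < a + b by rewrite addr_gt0.
have ab0 : a + b != 0 by rewrite gt_eqF.
have p01 : 0 <= a / (a + b) <= 1.
  by rewrite divr_ge0 ?(ltW a0) ?(ltW ab_gt0) // ler_pdivrMr // mul1r lerDl (ltW b0).
have x10 : 0 <= mu - a by rewrite subr_ge0.
have x20 : 0 <= mu + b by rewrite addr_ge0 // ltW // (lt_le_trans a0 amu).
split.
- exact: integrable_two_point_law.
- by rewrite (integral_two_point_law p01 (h := id)) // mean_two_point.
- by rewrite (integral_two_point_law p01 (h := fun x => x ^+ 2)) ?sqr_ge0 //
     second_moment_two_point // abE.
- exact: two_point_law_lt0.
- rewrite (integral_two_point_law p01 (h := fun x => negpart (x - t))) ?negpart_ge0 ?lee_fin //.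
  exact: measurable_negpart_subr.
Qed.

Lemma Lplus_neq0_slack (t mu sigma lam : R) : 0 < mu -> 0 < sigma ->
  negpart (mu - t) < lam -> Lplus t mu sigma lam !=set0.
Proof.
move=> mu0 s0 hlam.
have s20 : 0 < sigma ^+ 2 by rewrite exprn_gt0.
(* [b = sigma^2 / a >= c >= t - mu] puts the upper point above [t]. *)
set c := Num.max 1 (t - mu).
have c0 : 0 < c by rewrite lt_max ltr01.
set a := Num.min mu (Num.min (lam - negpart (mu - t)) (sigma ^+ 2 / c)).
have a0 : 0 < a by rewrite !lt_min mu0 subr_gt0 hlam divr_gt0.
set b := sigma ^+ 2 / a.
have b0 : 0 < b by rewrite divr_gt0.
have abE : a * b = sigma ^+ 2 by rewrite /b mulrC divfK // gt_eqF.
have tb : t <= mu + b.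
  have ac : a <= sigma ^+ 2 / c by rewrite !ge_min lexx !orbT.
  have cb : c <= b by rewrite /b ler_pdivlMr // mulrC -ler_pdivlMr.
  have : t - mu <= c by rewrite le_max lexx orbT.
  lra.
exists (two_point_law (mu - a) (mu + b) (a / (a + b))).
apply: Lplus_two_point => //; first by rewrite a0 ge_min lexx.
rewrite ger0_negpart ?subr_ge0 // mulr0 add0r.
apply: (@le_trans _ _ (negpart (mu - a - t))).
  by rewrite ler_piMl ?negpart_ge0 // lerBlDr lerDl divr_ge0 // ltW // addr_gt0.
rewrite (_ : mu - a - t = mu - t - a); last by ring.
apply: le_trans (negpart_subr_le _ (ltW a0)) _.
by rewrite -lerBrDl !ge_min lexx orbT.
Qed.

Lemma Lplus_neq0_tight (t mu sigma : R) : 0 < mu -> 0 < sigma ->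
  sigma ^+ 2 <= mu * (t - mu) -> Lplus t mu sigma (t - mu) !=set0.
Proof.
move=> mu0 s0 hs.
set b := sigma ^+ 2 / mu.
have b0 : 0 < b by rewrite divr_gt0 // exprn_gt0.
have abE : mu * b = sigma ^+ 2 by rewrite /b mulrC divfK // gt_eqF.
have bt : b <= t - mu by rewrite /b ler_pdivrMr // mulrC.
have mean := mean_two_point mu (lt0r_neq0 (addr_gt0 mu0 b0)).
exists (two_point_law (mu - mu) (mu + b) (mu / (mu + b))).
apply: Lplus_two_point; rewrite ?mu0 ?lexx //.
rewrite !ler0_negpart; lra.
Qed.

End two_point_Lplus.

Section integrable_law.
Variables (R : realType) (P : probability R R).
Hypothesis intX : P.-integrable [set: R] EFin.

Lemma probability_gt_eq0 (t mu : R) : 0 <= t ->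
  (\int[P]_x x%:E = mu%:E)%E -> (\int[P]_x (negpart (x - t))%:E <= (t - mu)%:E)%E ->
  P [set x | t < x] = 0%E.
Proof.
move=> t0 EX Eneg.
have mpos : measurable_fun [set: R] (fun x => (Num.max (x - t) 0)%:E).
  by apply/measurable_EFinP; apply: measurable_maxr => //; exact: measurable_funB.
have pos_ge0 x : [set: R] x -> (0 <= (Num.max (x - t) 0)%:E)%E.
  by rewrite lee_fin le_max lexx orbT.
have int_neg : P.-integrable [set: R] (fun x => (negpart (x - t))%:E).
  apply/integrableP; split; first by apply/measurable_EFinP; exact: measurable_negpart_subr.
  under eq_integral do rewrite gee0_abs ?lee_fin ?negpart_ge0 //.
  exact: le_lt_trans Eneg (ltry _).
have Epos : (\int[P]_x ((Num.max (x - t) 0)%:E + t%:E) =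
             \int[P]_x (negpart (x - t))%:E + mu%:E)%E.
  rewrite -EX -integralD //; apply: eq_integral => x _.
  by rewrite -!EFinD -negpart_addr; congr EFin; ring.
rewrite ge0_integralD // integral_cst // in Epos.
rewrite [X in (_ * X)%E]probability_setT mule1 in Epos.
have Epos0 : (\int[P]_x (Num.max (x - t) 0)%:E = 0)%E.
  apply/le_anti; rewrite integral_ge0 // andbT -(leeD2rE (x := t%:E)) // Epos add0e.
  by rewrite (le_trans (leeD2r _ Eneg)) // -EFinD subrK.
have [N [mN PN0 sub]] : ae_eq P [set: R] (fun x => (Num.max (x - t) 0)%:E) (cst 0%E).
  apply/(ae_eq_integral_abs P measurableT mpos).
  by rewrite -Epos0; apply: eq_integral => x _; rewrite gee0_abs // pos_ge0.
apply/negligibleP; first by rewrite -set_itvoy; exact: measurable_itv.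
exists N; split => // x /= tx; apply: sub => /(_ I) [/eqP].
by rewrite gt_eqF // lt_max subr_gt0 tx.
Qed.

Lemma second_moment_le (t : R) : P [set x | x < 0] = 0%E -> P [set x | t < x] = 0%E ->
  (\int[P]_x (x ^+ 2)%:E <= t%:E * \int[P]_x x%:E)%E.
Proof.
move=> P_lt0 P_gt.
have mlt0 : measurable [set x : R | x < 0] by rewrite -set_itvNyo; exact: measurable_itv.
have mgt : measurable [set x : R | t < x] by rewrite -set_itvoy; exact: measurable_itv.
set N := [set x : R | x < 0] `|` [set x | t < x].
have mN : measurable N by exact: measurableU.
have PN0 : P N = 0%E by rewrite measureU0.
have mD : measurable ([set: R] `\` N) by exact: measurableD.
have inD x : ([set: R] `\` N) x -> 0 <= x <= t.
  by move=> [_ /not_orP[/negP + /negP]]; rewrite -!leNgt => -> ->.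
have mX2 : measurable_fun [set: R] (fun x => (x ^+ 2)%:E).
  by apply/measurable_EFinP; exact: measurable_funX.
rewrite (ge0_negligible_integral _ _ _ _ PN0) //; last by move=> x _; rewrite lee_fin sqr_ge0.
rewrite [in leRHS](negligible_integral _ _ _ PN0) // -integralZl //; last first.
  exact: integrableS intX.
apply: ge0_le_integral => //.
- by move=> x _; rewrite lee_fin sqr_ge0.
- exact: measurable_funS mX2.
- by apply/measurable_EFinP; exact: measurable_funM.
- by move=> x /inD /andP[x0 xt]; rewrite lee_fin expr2 ler_wpM2r.
Qed.

End integrable_law.

Lemma Lplus_tight_variance (R : realType) (t mu sigma : R) (P : probability R R) :
  0 < mu -> mu < t -> Lplus t mu sigma (t - mu) P -> sigma ^+ 2 <= mu * (t - mu).
Proof.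
move=> mu0 mut [intX EX EX2 P_lt0 Eneg].
have P_gt := probability_gt_eq0 intX (ltW (lt_trans mu0 mut)) EX Eneg.
have := second_moment_le intX P_lt0 P_gt.
rewrite EX EX2 -EFinM lee_fin.
lra.
Qed.

Theorem proposition3 (R : realType) (t mu sigma lam : R) :
  0 < mu -> 0 < sigma -> 0 < lam -> negpart (mu - t) <= lam ->
  (Lplus t mu sigma lam !=set0 <->
   (negpart (mu - t) < lam \/
    (lam = negpart (mu - t) /\ sigma ^+ 2 <= mu * (t - mu)))).
Proof.
move=> mu0 s0 lam0 hlam; split.
- case=> P LP; have [slack|tight] := ltP (negpart (mu - t)) lam; [by left | right].
  have lamE : lam = negpart (mu - t) by apply/le_anti; rewrite tight hlam.
  have mut : mu < t by rewrite -subr_lt0 -negpart_gt0 -lamE.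
  have lam_tmu : lam = t - mu by rewrite lamE ler0_negpart ?opprB // subr_le0 ltW.
  by rewrite lam_tmu in LP; split => //; exact: Lplus_tight_variance mu0 mut LP.
- case=> [slack | [lamE hs]]; first exact: Lplus_neq0_slack.
  have mut : mu < t by rewrite -subr_lt0 -negpart_gt0 -lamE.
  rewrite lamE ler0_negpart ?opprB ?subr_le0 ?ltW //.
  exact: Lplus_neq0_tight.
Qed.
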